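(* Let $D=(V,A)$ be a directed graph with source $s\in V$, sink $t\in V$, capacities $u\in\mathbb{R}_+^A$, interdiction costs $c\in\mathbb{R}_+^A$, and interdictor budget $B_I\ge 0$, and assume at least one arc has positive interdiction cost. For each arc $f\in A$ with $c_f>0$, let $x^{(f)}$ be an optimal solution of the linear program $[\mathrm{LP}_{\mathrm{flow}}(f)]$ (defined in the context), and let $f^*$ be an arc for which the optimal objective value of $[\mathrm{LP}_{\mathrm{flow}}(f^* )]$ is largest. Then $x^{(f^* )}$ is an optimal strategy for the flow player, i.e. $x^{(f^* )}\in\arg\max_{x\in X}\min_{z\in\Omega}\mathrm{val}(x,z)$.
   Context: $\mathcal{P}$ is the set of all $s$-$t$-paths in $D$ (a path is identified with its arc set). The flow player's strategies are the feasible path flows $X=\{x\in\mathbb{R}_+^{\mathcal{P}}:\sum_{P\in\mathcal{P}:e\in P}x_P\le u_e\ \forall e\in A\}$. After the flow player chooses $x$, the interdictor chooses $z\in\Omega=\{z\in\mathbb{R}_+^{A\times\mathcal{P}}:\sum_{e\in A}c_e\sum_{P\in\mathcal{P}:e\in P}z_{e,P}\le B_I\}$ ($z_{e,P}$ is the amount of flow stolen from path $P$ at arc $e$). The value is $\mathrm{val}(x,z)=\sum_{P\in\mathcal{P}}\big(x_P-\sum_{e\in P}z_{e,P}\big)^+$; the flow player maximizes $\min_{z\in\Omega}\mathrm{val}(x,z)$. For a fixed arc $f$ with $c_f>0$ define $B'=B_I/c_f$, $c'_e=\min\{c_e/c_f,1\}$ for $e\in A$, and $\bar c'_P=\min_{e\in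 P}c'_e$ for $P\in\mathcal{P}$. Then $[\mathrm{LP}_{\mathrm{flow}}(f)]$ is: maximize $\sum_{P\in\mathcal{P}}\bar c'_P x_P-B'$ subject to $\sum_{P\in\mathcal{P}:e\in P}x_P\le u_e$ for all $e\in A$ and $x_P\ge 0$ for all $P\in\mathcal{P}$. *)

From HB Require Import structures.
From mathcomp Require Import all_boot all_order all_algebra.
From mathcomp Require Import classical_sets reals.
Set Implicit Arguments. Unset Strict Implicit. Unset Printing Implicit Defensive.
Import Order.TTheory GRing.Theory Num.Theory.
Local Open Scope ring_scope.
Local Open Scope classical_set_scope.

Section Interdiction.
Variables (V A : finType) (tl hd : A -> V) (s t : V).

Fixpoint walk_to_t (v : V) (p : seq A) : bool :=
  match p with
  | [::] => v == t
  | e :: p' => (tl e == v) && walk_to_t (hd e) p'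
  end.

Definition is_st_path_seq (p : seq A) : bool :=
  walk_to_t s p && uniq (s :: map hd p).

(* a set of arcs is an s-t path if it is the arc set of a simple s-t path
   (a simple path uses at most #|A| arcs, so the bound is harmless) *)
Definition is_st_path (P : {set A}) : bool :=
  [exists n : 'I_#|A|.+1, exists p : n.-tuple A,
     is_st_path_seq p && (P == [set e in p])].

Definition stpath := {P : {set A} | is_st_path P}.

Variable R : realType.
Variables (u c : A -> R) (BI : R).

Definition feasible_flow (x : stpath -> R) : Prop :=
  (forall P, 0 <= x P) /\
  (forall e : A, \sum_(P : stpath | e \in val P) x P <= u e).

Definition Omega : set (A -> stpath -> R) :=
  [set z | (forall e P, 0 <= z e P) /\
           \sum_(e : A) c e * \sum_(P : stpath | e \in val P) z e P <= BI].

Definition val_xz (x : stpath -> R) (z : A -> stpath -> R) : R :=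
  \sum_(P : stpath) Num.max 0 (x P - \sum_(e in val P) z e P).

Definition flow_value (x : stpath -> R) : R :=
  inf [set val_xz x z | z in Omega].

Definition optimal_flow_strategy (x : stpath -> R) : Prop :=
  feasible_flow x /\
  forall y, feasible_flow y -> flow_value y <= flow_value x.

Definition Bp (f : A) : R := BI / c f.
Definition cp (f e : A) : R := Num.min (c e / c f) 1.
Definition cbarp (f : A) (P : stpath) : R :=
  \big[Num.min/1]_(e in val P) cp f e.

Definition LP_obj (f : A) (x : stpath -> R) : R :=
  \sum_(P : stpath) cbarp f P * x P - Bp f.

Definition LP_optimal (f : A) (x : stpath -> R) : Prop :=
  feasible_flow x /\
  forall y, feasible_flow y -> LP_obj f y <= LP_obj f x.

End Interdiction.

(* Weak duality: for c_f > 0 the interdictor can remove at most B_I / c_f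
   units of "normalised" flow, since stealing one unit at arc e costs c_e and
   is worth at most cbar'_P <= c_e / c_f, so LP_flow(f) bounds the value of
   every flow from below.  Conversely, for a fixed flow y let f maximise the
   LP objective in f; the interdictor steals, at the cheapest arc of each path,
   all flow of the paths whose cheapest arc costs less than tau = c_f and a
   fraction of the flow of those whose cheapest arc costs exactly tau.  The
   maximality of f forces exactly the budget to be spent (or all flow to be
   removed), and then the value of y equals the LP objective (or 0). *)

From HB Require Import structures.
From mathcomp Require Import all_boot all_order all_algebra.
From mathcomp Require Import classical_sets reals.
From mathcomp Require Import ring lra.
Import Order.TTheory GRing.Theory Num.Theory.
Local Open Scope ring_scope.
Set Implicit Arguments. Unset Strict Implicit. Unset Printing Implicit Defensive.

Section WeakDuality.
Variables (V A : finType) (tl hd : A -> V) (s t : V).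
Variables (R : realType) (c : A -> R) (BI : R).
Hypotheses (hc : forall e, 0 <= c e) (hB : 0 <= BI).

Local Notation stp := (stpath tl hd s t).

Lemma val_xz_ge0 (x : stp -> R) z : 0 <= val_xz x z.
Proof. by apply: sumr_ge0 => P _; rewrite le_max lexx. Qed.

Lemma Omega0 : Omega c BI (fun (_ : A) (_ : stp) => 0).
Proof. by split=> //; rewrite big1 // => e _; rewrite big1 ?mulr0. Qed.

Lemma cbarp_ge0 f (P : stp) : 0 < c f -> 0 <= cbarp c f P.
Proof.
move=> cf; apply: le_bigmin => // e _.
by rewrite le_min ler01 andbT divr_ge0 // ltW.
Qed.

Lemma cbarp_le1 f (P : stp) : cbarp c f P <= 1.
Proof. exact: bigmin_le_id. Qed.

Lemma cbarp_le_cost f (P : stp) e : e \in val P -> cbarp c f P <= c e / c f.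
Proof. by move=> eP; apply: le_trans (bigmin_le_cond _ _ eP) _; rewrite ge_min lexx. Qed.

Lemma cbarp_mul_le_budget f z : 0 < c f -> Omega c BI z ->
  \sum_(P : stp) cbarp c f P * \sum_(e in val P) z e P <= BI / c f.
Proof.
move=> cf [z0 zB]; have cf1 : 0 <= (c f)^-1 by rewrite invr_ge0 ltW.
apply: le_trans (_ : \sum_(P : stp) \sum_(e in val P) c e / c f * z e P <= _).
  apply: ler_sum => P _; rewrite mulr_sumr; apply: ler_sum => e eP.
  by rewrite ler_wpM2r // cbarp_le_cost.
rewrite (exchange_big_dep xpredT) //=.
apply: le_trans (ler_wpM2r cf1 zB); rewrite mulr_suml; apply: ler_sum => e _.
by rewrite mulr_sumr mulr_suml; apply: ler_sum => P _; rewrite mulrAC.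
Qed.

Lemma LP_obj_le_val f (x : stp -> R) z : 0 < c f -> (forall P, 0 <= x P) ->
  Omega c BI z -> LP_obj c BI f x <= val_xz x z.
Proof.
move=> cf x0 Oz; have [z0 _] := Oz.
pose S (P : stp) := \sum_(e in val P) z e P.
have cbar_le P : cbarp c f P * (x P - S P) <= Num.max 0 (x P - S P).
  have [xS|xS] := lerP 0 (x P - S P).
    by rewrite ler_piMl // (cbarp_ge0, cbarp_le1).
  by rewrite mulr_ge0_le0 ?cbarp_ge0 ?ltW.
rewrite /LP_obj /Bp; apply: le_trans (lerB (lexx _) (cbarp_mul_le_budget cf Oz)) _.
by rewrite -sumrB; apply: ler_sum => P _; rewrite -mulrBr; apply: cbar_le.
Qed.

Lemma flow_value_le_val (x : stp -> R) z : Omega c BI z -> flow_value c BI x <= val_xz x z.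
Proof.
move=> Oz; apply: ge_inf; last by exists z.
by exists 0 => _ [z' _ <-]; apply: val_xz_ge0.
Qed.

Lemma LP_obj_le_flow_value f (x : stp -> R) : 0 < c f -> (forall P, 0 <= x P) ->
  Num.max 0 (LP_obj c BI f x) <= flow_value c BI x.
Proof.
move=> cf x0; apply: lb_le_inf.
  by exists (val_xz x (fun _ _ => 0)), (fun _ _ => 0); first exact: Omega0.
by move=> _ [z Oz <-]; rewrite ge_max val_xz_ge0 LP_obj_le_val.
Qed.

End WeakDuality.

(* An arcless path (when s = t) has cbar' = 1 and meets no capacity, which would
   make LP_flow unbounded. *)
Lemma LP_optimal_path_arc (V A : finType) (tl hd : A -> V) (s t : V)
    (R : realType) (u c : A -> R) (BI : R) f (x : stpath tl hd s t -> R) :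
  LP_optimal u c BI f x -> forall P : stpath tl hd s t, exists e, e \in val P.
Proof.
move=> [[x0 xcap] xopt] P0; apply/set0Pn/negP => /eqP P0_empty.
pose y P := x P + (P == P0)%:R.
have y_feasible : feasible_flow u y.
  split=> [P|e]; first by rewrite addr_ge0.
  rewrite big_split /= [X in _ + X]big1 ?addr0 // => P eP.
  by case: eqP eP => // ->; rewrite P0_empty inE.
have gain : \sum_P cbarp c f P * (P == P0)%:R = 1.
  rewrite (bigD1 P0) //= eqxx mulr1 big1 ?addr0 => [|P /negbTE ->]; last by rewrite mulr0.
  by rewrite /cbarp P0_empty big_set0.
have := xopt y y_feasible; rewrite /LP_obj lerD2r.
under eq_bigr do rewrite mulrDr.
rewrite big_split /= gain; lra.
Qed.

Section ThresholdInterdiction.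
Variables (V A : finType) (tl hd : A -> V) (s t : V).
Variables (R : realType) (c : A -> R) (BI : R).
Hypotheses (hc : forall e, 0 <= c e) (hB : 0 <= BI).

Local Notation stp := (stpath tl hd s t).

Definition interdiction_cost (z : A -> stp -> R) : R :=
  \sum_e c e * \sum_(P : stp | e \in val P) z e P.

Hypothesis path_arc : forall P : stp, exists e, e \in val P.

Definition cheapest_arc (P : stp) : A :=
  [arg min_(e < xchoose (path_arc P) in val P) c e]%O.

Definition min_cost (P : stp) : R := c (cheapest_arc P).

Lemma cheapest_arc_in (P : stp) : cheapest_arc P \in val P.
Proof. by rewrite /cheapest_arc; case: arg_minP => //; apply: xchooseP. Qed.

Lemma min_cost_le (P : stp) e : e \in val P -> min_cost P <= c e.
Proof.
by rewrite /min_cost /cheapest_arc; case: arg_minP => [|a _]; [apply: xchooseP | apply].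
Qed.

Lemma min_cost_ge0 (P : stp) : 0 <= min_cost P.
Proof. exact: hc. Qed.

Lemma cbarp_min_cost f (P : stp) : 0 < c f -> cbarp c f P = Num.min (min_cost P / c f) 1.
Proof.
move=> cf; apply/le_anti/andP; split.
  exact: le_trans (bigmin_le_cond _ _ (cheapest_arc_in P)) _.
apply: le_bigmin => [|e eP]; first by rewrite ge_min lexx orbT.
by rewrite /cp le_min !ge_min lexx orbT andbT ler_pM2r ?invr_gt0 ?min_cost_le.
Qed.

Variable y : stp -> R.
Hypothesis y0 : forall P, 0 <= y P.

Lemma LP_obj_min_cost f : 0 < c f ->
  LP_obj c BI f y = \sum_P Num.min (min_cost P / c f) 1 * y P - BI / c f.
Proof. by move=> cf; congr (_ - _); apply: eq_bigr => P _; rewrite cbarp_min_cost. Qed.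

Definition cost_below (tau : R) : R :=
  \sum_P (if min_cost P < tau then min_cost P * y P else 0).

Definition cost_upto (tau : R) : R :=
  \sum_P (if min_cost P <= tau then min_cost P * y P else 0).

Lemma cost_below_le_upto tau : cost_below tau <= cost_upto tau.
Proof.
apply: ler_sum => P _; case: ifP => [/ltW -> //|_].
by case: ifP => // _; rewrite mulr_ge0 ?min_cost_ge0.
Qed.

Lemma LP_obj_sub_gap fa fb : 0 < c fa -> c fa < c fb ->
    (forall e, c e <= c fa \/ c fb <= c e) ->
  LP_obj c BI fa y - LP_obj c BI fb y =
    ((c fa)^-1 - (c fb)^-1) * (cost_below (c fb) - BI).
Proof.
move=> ha hab gap; have hb := lt_trans ha hab.
rewrite !LP_obj_min_cost // mulrBr /cost_below mulr_sumr.
suff <- : \sum_P Num.min (min_cost P / c fa) 1 * y P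
          - \sum_P Num.min (min_cost P / c fb) 1 * y P
        = \sum_P ((c fa)^-1 - (c fb)^-1) *
                  (if min_cost P < c fb then min_cost P * y P else 0) by ring.
rewrite -sumrB; apply: eq_bigr => P _.
have [mb|bm] := ltP (min_cost P) (c fb).
  have ma : min_cost P <= c fa.
    by case: (gap (cheapest_arc P)) => // /(lt_le_trans mb); rewrite ltxx.
  rewrite !min_l ?ler_pdivrMr ?mul1r ?(ltW mb) //; ring.
by rewrite !min_r ?subrr ?mulr0 // ler_pdivlMr ?mul1r // (le_trans (ltW hab)).
Qed.

Definition stolen_fraction (tau th : R) (P : stp) : R :=
  if min_cost P < tau then 1 else if min_cost P == tau then th else 0.

Definition threshold_interdiction (tau th : R) (e : A) (P : stp) : R :=
  if e == cheapest_arc P then stolen_fraction tau th P * y P else 0.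

Lemma stolen_fraction_ge0 tau th (P : stp) : 0 <= th -> 0 <= stolen_fraction tau th P.
Proof. by rewrite /stolen_fraction; case: ifP => _ //; case: ifP. Qed.

Lemma stolen_fraction_le1 tau th (P : stp) : th <= 1 -> stolen_fraction tau th P <= 1.
Proof. by rewrite /stolen_fraction; case: ifP => _ //; case: ifP. Qed.

Lemma threshold_interdiction_ge0 tau th e (P : stp) :
  0 <= th -> 0 <= threshold_interdiction tau th e P.
Proof.
move=> th0; rewrite /threshold_interdiction; case: ifP => // _.
by rewrite mulr_ge0 ?stolen_fraction_ge0.
Qed.

Lemma threshold_interdiction_path tau th (P : stp) :
  \sum_(e in val P) threshold_interdiction tau th e P = stolen_fraction tau th P * y P.
Proof.
rewrite (bigD1 (cheapest_arc P)) ?cheapest_arc_in //= /threshold_interdiction eqxx.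
by rewrite big1 ?addr0 // => e /andP[_ /negbTE ->].
Qed.

Lemma interdiction_cost_threshold_sum tau th :
  interdiction_cost (threshold_interdiction tau th) =
    \sum_P min_cost P * (stolen_fraction tau th P * y P).
Proof.
have arc_sum e : \sum_(P : stp | e \in val P) threshold_interdiction tau th e P
               = \sum_P threshold_interdiction tau th e P.
  rewrite big_mkcond; apply: eq_bigr => P _; case: ifP => // /negbT eP.
  by rewrite /threshold_interdiction; case: eqP eP => // ->; rewrite cheapest_arc_in.
rewrite /interdiction_cost; under eq_bigr do rewrite arc_sum mulr_sumr.
rewrite exchange_big; apply: eq_bigr => P _.
rewrite (bigD1 (cheapest_arc P)) //= /threshold_interdiction eqxx.
by rewrite big1 ?addr0 => [|e /negbTE ->]; last by rewrite mulr0.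
Qed.

Lemma interdiction_cost_threshold tau th :
  interdiction_cost (threshold_interdiction tau th) =
    cost_below tau + th * (cost_upto tau - cost_below tau).
Proof.
rewrite interdiction_cost_threshold_sum /cost_below /cost_upto.
rewrite -sumrB mulr_sumr -big_split /=; apply: eq_bigr => P _.
by rewrite /stolen_fraction; case: (ltrgtP (min_cost P) tau) => _; rewrite ?eqxx; ring.
Qed.

Lemma val_threshold_interdiction f th : 0 < c f -> 0 <= th <= 1 ->
  val_xz y (threshold_interdiction (c f) th) =
    LP_obj c BI f y + (BI - interdiction_cost (threshold_interdiction (c f) th)) / c f.
Proof.
move=> cf /andP[th0 th1]; have cf0 : c f != 0 by rewrite gt_eqF.
rewrite interdiction_cost_threshold_sum LP_obj_min_cost // mulrBl addrA subrK.
rewrite mulr_suml -sumrB; apply: eq_bigr => P _.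
rewrite threshold_interdiction_path -{1}[y P]mul1r -mulrBl max_r; last first.
  by rewrite mulr_ge0 ?subr_ge0 ?stolen_fraction_le1.
rewrite /stolen_fraction; case: (ltrgtP (min_cost P) (c f)) => m_cf.
- by rewrite min_l ?ler_pdivrMr ?mul1r ?ltW //; field.
- by rewrite min_r ?ler_pdivlMr ?mul1r ?ltW //; field.
- by rewrite m_cf divff // min_l //; field.
Qed.

Lemma val_threshold_interdiction_all tau : (forall P, min_cost P <= tau) ->
  val_xz y (threshold_interdiction tau 1) = 0.
Proof.
move=> m_le; apply: big1 => P _; rewrite threshold_interdiction_path /stolen_fraction.
have := m_le P; rewrite le_eqVlt => /predU1P[->|->]; last by rewrite mul1r subrr maxxx.
by rewrite ltxx eqxx mul1r subrr maxxx.
Qed.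

Section Maximizer.
Variable f0 : A.
Hypothesis f0_pos : 0 < c f0.
Hypothesis f0_max : forall f, 0 < c f -> LP_obj c BI f y <= LP_obj c BI f0 y.

Lemma cost_below_le_budget : cost_below (c f0) <= BI.
Proof.
rewrite leNgt; apply/negP => budget_lt.
case: (boolP [exists e, (0 < c e) && (c e < c f0)]) => [/existsP[e0 e0_in] | /existsPn no_arc].
  have [g /andP[g_pos g_lt] g_max] :=
    @arg_maxP _ _ _ e0 [pred e | (0 < c e) && (c e < c f0)] c e0_in.
  have gap e : c e <= c g \/ c f0 <= c e.
    have [e_le0|e_pos] := leP (c e) 0; first by left; apply: le_trans e_le0 (ltW g_pos).
    by have [e_lt|] := ltP (c e) (c f0); [left; apply: g_max; rewrite /= e_pos | right].
  have gain : 0 < ((c g)^-1 - (c f0)^-1) * (cost_below (c f0) - BI).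
    by rewrite mulr_gt0 // subr_gt0 // ltf_pV2 ?posrE.
  by move: (f0_max g_pos); rewrite -subr_le0 (LP_obj_sub_gap g_pos g_lt gap) leNgt gain.
suff below0 : cost_below (c f0) = 0 by move: budget_lt; rewrite below0 ltNge hB.
apply: big1 => P _; case: ifP => // m_lt; have := no_arc (cheapest_arc P).
rewrite [c _ < _]m_lt andbT -leNgt => m_le0.
have -> : min_cost P = 0 by apply/le_anti; rewrite m_le0 min_cost_ge0.
by rewrite mul0r.
Qed.

Lemma arc_cost_le_max : cost_upto (c f0) < BI -> forall e, c e <= c f0.
Proof.
move=> upto_lt e; rewrite leNgt; apply/negP => f0_lt.
have [g f0_g g_min] := @arg_minP _ _ _ e [pred e | c f0 < c e] c f0_lt.
have g_pos := lt_trans f0_pos f0_g.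
have gap e' : c e' <= c f0 \/ c g <= c e'.
  by have [|/g_min] := leP (c e') (c f0); [left | right].
have below_g : cost_below (c g) = cost_upto (c f0).
  apply: eq_bigr => P _; have [m_le|m_ge] := gap (cheapest_arc P).
    by rewrite [min_cost P <= _]m_le (le_lt_trans m_le f0_g).
  by rewrite ltNge [c g <= _]m_ge leNgt (lt_le_trans f0_g m_ge).
have loss : ((c f0)^-1 - (c g)^-1) * (cost_below (c g) - BI) < 0.
  by rewrite pmulr_rlt0 ?subr_gt0 ?ltf_pV2 ?posrE // below_g subr_lt0.
by move: (f0_max g_pos); rewrite -subr_ge0 (LP_obj_sub_gap f0_pos f0_g gap) leNgt loss.
Qed.

Lemma exists_threshold_interdiction :
  exists2 z, Omega c BI z & val_xz y z <= Num.max 0 (LP_obj c BI f0 y).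
Proof.
have Omega_threshold th : 0 <= th <= 1 ->
    interdiction_cost (threshold_interdiction (c f0) th) <= BI ->
  Omega c BI (threshold_interdiction (c f0) th).
  by move=> /andP[th0 _] cost_le; split=> // e P; apply: threshold_interdiction_ge0.
have [budget_le | upto_lt] := lerP BI (cost_upto (c f0)).
  have below_le := cost_below_le_budget.
  set D := cost_upto (c f0) - cost_below (c f0).
  have [th th01 cost_eq] : exists2 th, 0 <= th <= 1 & cost_below (c f0) + th * D = BI.
    have [D_0 | D_neq0] := eqVneq D 0.
      exists 0; first by rewrite lexx ler01.
      by move: D_0 budget_le; rewrite /D mul0r addr0; lra.
    have D_pos : 0 < D by rewrite lt_def D_neq0 subr_ge0 cost_below_le_upto.
    exists ((BI - cost_below (c f0)) / D); last by rewrite divfK // addrC subrK.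
    apply/andP; split; first by apply: divr_ge0; [rewrite subr_ge0 | exact: ltW].
    by rewrite ler_pdivrMr // mul1r /D lerD2r.
  have cost_BI : interdiction_cost (threshold_interdiction (c f0) th) = BI.
    by rewrite interdiction_cost_threshold -/D cost_eq.
  exists (threshold_interdiction (c f0) th); first by apply: Omega_threshold; rewrite ?cost_BI.
  by rewrite val_threshold_interdiction // cost_BI subrr mul0r addr0 le_max lexx orbT.
exists (threshold_interdiction (c f0) 1).
  apply: Omega_threshold; first by rewrite lexx ler01.
  by rewrite interdiction_cost_threshold mul1r addrC subrK ltW.
by rewrite val_threshold_interdiction_all ?le_max ?lexx // => P; apply: arc_cost_le_max.
Qed.

End Maximizer.

Lemma exists_interdiction_le_LP_obj : (exists e, 0 < c e) ->
  exists f, 0 < c f /\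
    exists2 z, Omega c BI z & val_xz y z <= Num.max 0 (LP_obj c BI f y).
Proof.
move=> [e0 e0_pos].
have [f0 f0_pos f0_max] :=
  @arg_maxP _ _ _ e0 [pred f | 0 < c f] (fun f => LP_obj c BI f y) e0_pos.
by exists f0; split=> //; apply: exists_threshold_interdiction.
Qed.

End ThresholdInterdiction.

Theorem theorem1 (V A : finType) (tl hd : A -> V) (s t : V)
  (R : realType) (u c : A -> R) (BI : R)
  (hu : forall e, 0 <= u e) (hc : forall e, 0 <= c e) (hB : 0 <= BI)
  (hpos : exists e, 0 < c e)
  (xf : A -> stpath tl hd s t -> R)
  (hxf : forall f, 0 < c f -> LP_optimal u c BI f (xf f))
  (fstar : A) (hfstar : 0 < c fstar)
  (hmax : forall f, 0 < c f ->
     LP_obj c BI f (xf f) <= LP_obj c BI fstar (xf fstar)) :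
  optimal_flow_strategy u c BI (xf fstar).
Proof.
have [xstar_feasible _] := hxf fstar hfstar.
have [xstar_ge0 _] := xstar_feasible.
have path_arc := LP_optimal_path_arc (hxf fstar hfstar).
split=> // y y_feasible.
have [y_ge0 _] := y_feasible.
have [f [f_pos [z Oz val_le]]] := exists_interdiction_le_LP_obj hc hB path_arc y_ge0 hpos.
have [_ xf_opt] := hxf f f_pos.
have LP_le := le_trans (xf_opt y y_feasible) (hmax f f_pos).
apply: le_trans (flow_value_le_val y Oz) _.
apply: le_trans val_le (le_trans _ (LP_obj_le_flow_value hc hB hfstar xstar_ge0)).
by rewrite ge_max le_max lexx le_max LP_le orbT.
Qed.
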